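(* Let $\Omega\subseteq\mathbb{R}^n$ be open, let $F:\Omega\times\mathbb{R}^N\times\mathbb{R}^{N\times n}\times(\mathbb{R}^N\otimes\mathbb{R}^{n\times n}_s)\to\mathbb{R}^N$ be locally bounded, and let $u:\Omega\to\mathbb{R}^N$ be continuous. Consider the system $F(x,u,Du,D^2u)=0$ on $\Omega$. (a) If $u$ is a contact solution of this system and $F$ is continuous, then at every point $x\in\Omega$ at which $u$ is twice differentiable we have $F(x,u(x),Du(x),D^2u(x))=0$. (b) If $u$ is twice differentiable at every point of $\Omega$ with $F(x,u(x),Du(x),D^2u(x))=0$ for all $x\in\Omega$, and $F$ is degenerate elliptic, then $u$ is a contact solution of the system.
   Context: Notation: summation over repeated indices; Greek indices run over $1,\dots,N$, Latin over $1,\dots,n$. $\mathbb{R}^{n\times n}_s$ denotes symmetric $n\times n$ matrices; $\mathbb{R}^N\otimes\mathbb{R}^{n\times n}_s$ is the space of arrays $\mathbf{X}=(\mathbf{X}_{\alpha ij})$ with $\mathbf{X}_{\alpha ij}=\mathbf{X}_{\alpha ji}$, and $\mathbf{X}:z\otimes z\in\mathbb{R}^N$ has components $\mathbf{X}_{\alpha ij}z_iz_j$. For $a,b\in\mathbb{R}^N$, $a\vee b:=\frac12(a\otimes b+b\otimes a)$, a symmetric $N\times N$ matrix; inequalities between symmetric matrices are in the sense of quadratic forms. $\mathbb{S}^{N-1}$ is the unit sphere of $\mathbb{R}^N$; for $\xi\in\mathbb{R}^N$, $\xi^\top v$ is the Euclidean inner product. Second contact jet: for continuous $u:\Omega\to\mathbb{R}^N$,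 $x\in\Omega$, $\xi\in\mathbb{S}^{N-1}$, $J^{2,\xi}u(x)$ is the set of $(P,\mathbf{X})\in\mathbb{R}^{N\times n}\times(\mathbb{R}^N\otimes\mathbb{R}^{n\times n}_s)$ such that there is a continuous $T:\mathbb{R}^n\setminus\{0\}\to\mathbb{R}^{N\times N}_s$ with $|T(y)|\to0$ as $y\to0$ and $\xi\vee[u(z)-u(x)-P(z-x)-\frac12\mathbf{X}:(z-x)\otimes(z-x)]\le |z-x|^2T(z-x)$ for all $z\neq x$ close to $x$. Its closure $\bar J^{2,\xi}u(x)$ is the set of $(P,\mathbf{X})$ for which there exist $\xi_m\in\mathbb{S}^{N-1}$, $x_m\in\Omega$, $(P_m,\mathbf{X}_m)\in J^{2,\xi_m}u(x_m)$ with $(\xi_m,x_m,P_m,\mathbf{X}_m)\to(\xi,x,P,\mathbf{X})$. $\xi$-envelope: $\xi^*F(x,\eta,P,\mathbf{X}):=\limsup_{\varepsilon\to0}\sup\{\xi^\top F(y,\theta,Q,\mathbf{Y}):|x-y|+|\eta-\theta|+|P-Q|+|\mathbf{X}-\mathbf{Y}|\le\varepsilon\}$. Contact solution: the continuous $u$ is a contact solution of $F(\cdot,u,Du,D^2u)=0$ on $\Omega$ if for all $x\in\Omega$, $\xi\in\mathbb{S}^{N-1}$ and $(P,\mathbf{X})\in\bar J^{2,\xi}u(x)$ we have $\xi^*F(x,u(x),P,\mathbf{X})\ge0$. Degenerate ellipticity: $F$ is degenerate elliptic if for all $(x,\eta,P)$ and all $\mathbf{X},\mathbf{Y}\in\mathbb{R}^N\otimes\mathbb{R}^{n\times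 n}_s$ the symmetric $n\times n$ matrix with entries $\big(F_\alpha(x,\eta,P,\mathbf{X})-F_\alpha(x,\eta,P,\mathbf{Y})\big)(\mathbf{X}-\mathbf{Y})_{\alpha ij}$ is positive semidefinite. *)

From HB Require Import structures.
From mathcomp Require Import all_boot all_order all_algebra.
From mathcomp Require Import boolp classical_sets reals constructive_ereal ereal.
Set Implicit Arguments. Unset Strict Implicit. Unset Printing Implicit Defensive.
Import Order.TTheory GRing.Theory Num.Theory.
Local Open Scope ring_scope.
Local Open Scope classical_set_scope.

Section Defs.
Variable R : realType.

Definition nrm (T : finType) (f : T -> R) : R := Num.sqrt (\sum_(i : T) f i ^+ 2).
Definition vsub (T : finType) (f g : T -> R) : T -> R := fun i => f i - g i.
Definition dist (T : finType) (f g : T -> R) : R := nrm (vsub f g).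
Definition dot (T : finType) (f g : T -> R) : R := \sum_(i : T) f i * g i.
Definition zerov (T : finType) : T -> R := fun _ => 0.

Definition vec (n : nat) := 'I_n -> R.
Definition mat (N n : nat) := ('I_N * 'I_n)%type -> R.
Definition arr (N n : nat) := ('I_N * 'I_n * 'I_n)%type -> R.

Definition symarr N n (X : arr N n) : Prop := forall a i j, X (a, i, j) = X (a, j, i).
Definition symmx N (A : ('I_N * 'I_N)%type -> R) : Prop := forall a b, A (a, b) = A (b, a).

Definition mv N n (P : mat N n) (h : vec n) : vec N := fun a => \sum_(i < n) P (a, i) * h i.
Definition quad N n (X : arr N n) (h : vec n) : vec N :=
  fun a => \sum_(i < n) \sum_(j < n) X (a, i, j) * h i * h j.

Definition vee N (a b : vec N) : ('I_N * 'I_N)%type -> R :=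
  fun p => (a p.1 * b p.2 + b p.1 * a p.2) / 2.
Definition qform N (A : ('I_N * 'I_N)%type -> R) (w : vec N) : R :=
  \sum_(a < N) \sum_(b < N) A (a, b) * w a * w b.
Definition mxle N (A B : ('I_N * 'I_N)%type -> R) : Prop :=
  forall w : vec N, qform A w <= qform B w.
Definition mxscale N (c : R) (A : ('I_N * 'I_N)%type -> R) : ('I_N * 'I_N)%type -> R :=
  fun p => c * A p.

Definition is_open n (Om : vec n -> Prop) : Prop :=
  forall x, Om x -> exists e, 0 < e /\ forall y, dist y x < e -> Om y.

Definition cont_on n N (Om : vec n -> Prop) (u : vec n -> vec N) : Prop :=
  forall x, Om x -> forall e, 0 < e -> exists d, 0 < d /\
    forall z, Om z -> dist z x < d -> dist (u z) (u x) < e.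

Definition jet2 N n (Om : vec n -> Prop) (u : vec n -> vec N) (xi : vec N) (x : vec n)
    (P : mat N n) (X : arr N n) : Prop :=
  symarr X /\
  exists T : vec n -> ('I_N * 'I_N)%type -> R,
    (forall y : vec n, y <> (@zerov 'I_n) -> symmx (T y)) /\
    (forall y : vec n, y <> (@zerov 'I_n) -> forall e, 0 < e -> exists d, 0 < d /\
       forall y' : vec n, y' <> (@zerov 'I_n) -> dist y' y < d -> dist (T y') (T y) < e) /\
    (forall e, 0 < e -> exists d, 0 < d /\
       forall y : vec n, y <> (@zerov 'I_n) -> nrm y < d -> nrm (T y) < e) /\
    (exists d, 0 < d /\ forall z, Om z -> z <> x -> dist z x < d ->
       mxle (vee xi (fun a => u z a - u x a - mv P (vsub z x) a
                              - 2^-1 * quad X (vsub z x) a))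
            (mxscale (nrm (vsub z x) ^+ 2) (T (vsub z x)))).

Definition seqcv (T : finType) (s : nat -> T -> R) (l : T -> R) : Prop :=
  forall e, 0 < e -> exists M, forall m, (M <= m)%N -> dist (s m) l < e.

Definition jet2bar N n (Om : vec n -> Prop) (u : vec n -> vec N) (xi : vec N) (x : vec n)
    (P : mat N n) (X : arr N n) : Prop :=
  exists (xis : nat -> vec N) (xs : nat -> vec n) (Ps : nat -> mat N n) (Xs : nat -> arr N n),
    (forall m, nrm (xis m) = 1 /\ Om (xs m) /\ jet2 Om u (xis m) (xs m) (Ps m) (Xs m)) /\
    seqcv xis xi /\ seqcv xs x /\ seqcv Ps P /\ seqcv Xs X.

(* xi-envelope:  limsup_{e -> 0} sup{ xi^T F(y,th,Q,Y) : |x-y|+|eta-th|+|P-Q|+|X-Y| <= e },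
   the limsup of the nondecreasing function e |-> sup{...} written as inf over e > 0;
   (y,th,Q,Y) ranges over the domain Om x R^N x R^{N x n} x (R^N (x) R^{n x n}_s) of F. *)
Definition env N n (Om : vec n -> Prop) (F : vec n -> vec N -> mat N n -> arr N n -> vec N)
    (xi : vec N) (x : vec n) (eta : vec N) (P : mat N n) (X : arr N n) : \bar R :=
  ereal_inf [set ereal_sup [set r | exists y th Q Y, Om y /\ symarr Y /\
                 dist x y + dist eta th + dist P Q + dist X Y <= e /\
                 r = (dot xi (F y th Q Y))%:E] | e in [set e : R | 0 < e]].

Definition contact_sol N n (Om : vec n -> Prop) (F : vec n -> vec N -> mat N n -> arr N n -> vec N)
    (u : vec n -> vec N) : Prop :=
  forall x xi P X, Om x -> nrm xi = 1 -> jet2bar Om u xi x P X ->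
    (0 <= env Om F xi x (u x) P X)%E.

Definition loc_bounded N n (Om : vec n -> Prop) (F : vec n -> vec N -> mat N n -> arr N n -> vec N) : Prop :=
  forall x eta P X, Om x -> symarr X -> exists e M, 0 < e /\
    forall y th Q Y, Om y -> symarr Y ->
      dist x y + dist eta th + dist P Q + dist X Y <= e -> nrm (F y th Q Y) <= M.

Definition F_continuous N n (Om : vec n -> Prop) (F : vec n -> vec N -> mat N n -> arr N n -> vec N) : Prop :=
  forall x eta P X, Om x -> symarr X -> forall e, 0 < e -> exists d, 0 < d /\
    forall y th Q Y, Om y -> symarr Y ->
      dist x y + dist eta th + dist P Q + dist X Y < d -> dist (F y th Q Y) (F x eta P X) < e.

Definition degenerate_elliptic N n (Om : vec n -> Prop) (F : vec n -> vec N -> mat N n -> arr N n -> vec N) : Prop :=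
  forall x eta P X Y, Om x -> symarr X -> symarr Y ->
    forall w : vec n, 0 <= \sum_(i < n) \sum_(j < n)
       (\sum_(a < N) (F x eta P X a - F x eta P Y a) * (X (a, i, j) - Y (a, i, j))) * w i * w j.

Definition is_deriv (T : finType) n (g : vec n -> T -> R) (x : vec n) (L : (T * 'I_n)%type -> R) : Prop :=
  forall e, 0 < e -> exists d, 0 < d /\ forall z, dist z x < d ->
    nrm (fun t => g z t - g x t - \sum_(j < n) L (t, j) * (z j - x j)) <= e * dist z x.

(* u is twice differentiable at x (differentiable near x, Du differentiable at x),
   with Du the first derivative (near x) and D2 = D(Du)(x) = D^2u(x), D2 (a,i,j) = d_j d_i u_a *)
Definition twice_diff_at N n (u : vec n -> vec N) (x : vec n) (Du : vec n -> mat N n) (D2 : arr N n) : Prop :=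
  (exists d, 0 < d /\ forall z, dist z x < d -> is_deriv u z (Du z)) /\ is_deriv Du x D2.

End Defs.

From HB Require Import structures.
From mathcomp Require Import all_boot all_order all_algebra.
From mathcomp Require Import boolp classical_sets reals constructive_ereal ereal.
From mathcomp Require Import ring lra.
Import Order.TTheory GRing.Theory Num.Theory.
Local Open Scope ring_scope.
Local Open Scope classical_set_scope.
Set Implicit Arguments. Unset Strict Implicit. Unset Printing Implicit Defensive.

(* (a) At a point where u is twice differentiable, Taylor's formula (obtained, like the
   symmetry of D^2u, from a mean value inequality along segments) makes the second-order
   remainder o(|z - x|^2).  Bounding it by H(|z - x|) |z - x|^2, with H continuous on
   (0, oo) and vanishing at 0, exhibits (Du(x), D^2u(x)) as a second contact jet for every
   unit xi; the contact condition and the continuity of F give xi^T F >= 0 for every unit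
   xi, hence F = 0.
   (b) If (P, X) lies in J^{2,xi} u(y), the contact inequality and Taylor's formula force
   (Du(y) - P) h + 1/2 (D^2u(y) - X) : h (x) h onto the ray -R_+ xi up to o(|h|^2).
   Scaling h gives P = Du(y) and (D^2u(y) - X) : h (x) h in -R_+ xi for every h, so degenerate
   ellipticity tested against D^2u(y), where F vanishes, yields xi^T F(y, u(y), P, X) >= 0.
   Points of the closure of the jet are reached through the local boundedness of F and
   the continuity of u. *)

Section Euclid.
Variables (R : realType) (T : finType).
Implicit Types (f g h : T -> R).

Lemma nrm_ge0 f : 0 <= nrm f.
Proof. exact: sqrtr_ge0. Qed.

Lemma nrm_sq f : nrm f ^+ 2 = \sum_i f i ^+ 2.
Proof. by rewrite sqr_sqrtr // sumr_ge0 // => i _; rewrite sqr_ge0. Qed.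

Lemma normr_le_nrm f i : `|f i| <= nrm f.
Proof.
rewrite -sqrtr_sqr; apply: ler_wsqrtr.
by rewrite (bigD1 i) //= lerDl sumr_ge0 // => j _; rewrite sqr_ge0.
Qed.

Lemma nrm0 : nrm (@zerov R T) = 0.
Proof. by rewrite /nrm big1 ?sqrtr0 // => i _; rewrite expr0n. Qed.

Lemma nrm_eq0 f : nrm f = 0 -> forall i, f i = 0.
Proof. by move=> f0 i; apply/normr0_eq0/le_anti; rewrite normr_ge0 -f0 normr_le_nrm. Qed.

Lemma nrm_gt0 f : f <> @zerov R T -> 0 < nrm f.
Proof.
move=> fn0; rewrite lt_def nrm_ge0 andbT; apply/eqP => f0; apply: fn0.
by apply: funext => i; rewrite (nrm_eq0 f0).
Qed.

Lemma dist_gt0 f g : f <> g -> 0 < dist f g.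
Proof.
move=> fg; apply: nrm_gt0 => fg0; apply: fg; apply: funext => i.
by have /= /eqP := congr1 (fun k => k i) fg0; rewrite /vsub subr_eq0 => /eqP.
Qed.

Lemma nrmZ c f : nrm (fun i => c * f i) = `|c| * nrm f.
Proof.
rewrite /nrm.
have -> : \sum_i (c * f i) ^+ 2 = c ^+ 2 * \sum_i f i ^+ 2.
  by rewrite mulr_sumr; apply: eq_bigr => i _; rewrite exprMn.
by rewrite sqrtrM ?sqr_ge0 // sqrtr_sqr.
Qed.

Lemma nrmN f : nrm (fun i => - f i) = nrm f.
Proof.
have -> : (fun i => - f i) = (fun i => -1 * f i) by apply: funext => i; rewrite mulN1r.
by rewrite nrmZ normrN normr1 mul1r.
Qed.

Lemma sumr_le_card (F : T -> R) c : (forall i, F i <= c) -> \sum_i F i <= #|T|%:R * c.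
Proof. by move=> Fc; rewrite mulr_natl -sumr_const; apply: ler_sum => i _. Qed.

Lemma nrm_le_card f c : (forall i, `|f i| <= c) -> nrm f <= #|T|%:R * c.
Proof.
move=> fc; have c0 : 0 <= \sum_i `|f i| by rewrite sumr_ge0.
apply: (@le_trans _ _ (\sum_i `|f i|)); last exact: sumr_le_card.
rewrite -(ger0_norm c0) -sqrtr_sqr; apply: ler_wsqrtr.
rewrite expr2 mulr_suml; apply: ler_sum => i _.
rewrite -(real_normK (num_real (f i))) expr2 ler_wpM2l //.
by rewrite (bigD1 i) //= lerDl sumr_ge0.
Qed.

Lemma dotC f g : dot f g = dot g f.
Proof. by apply: eq_bigr => i _; rewrite mulrC. Qed.

Lemma dotBr h f g : dot h f - dot h g = dot h (vsub f g).
Proof. by rewrite /dot -sumrB; apply: eq_bigr => i _; rewrite mulrBr. Qed.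

Lemma cauchy_schwarz f g : `|dot f g| <= nrm f * nrm g.
Proof.
rewrite -sqrtrM ?sumr_ge0 // => [|i _]; last by rewrite sqr_ge0.
rewrite -sqrtr_sqr; apply: ler_wsqrtr.
set A := \sum_i f i ^+ 2; set B := \sum_i g i ^+ 2; set S := dot f g.
have A0 : 0 <= A by rewrite sumr_ge0 // => i _; rewrite sqr_ge0.
have disc t : 0 <= t ^+ 2 * A - 2 * t * S + B.
  have -> : t ^+ 2 * A - 2 * t * S + B = \sum_i (t * f i - g i) ^+ 2.
    rewrite /A /S /B /dot !mulr_sumr -sumrN -!big_split /=.
    by apply: eq_bigr => i _; ring.
  by rewrite sumr_ge0 // => i _; rewrite sqr_ge0.
have [A_eq0|A_neq0] := eqVneq A 0.
  have f0 : forall i, f i = 0 by apply: nrm_eq0; rewrite /nrm -/A A_eq0 sqrtr0.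
  rewrite /S /dot big1 ?expr0n ?A_eq0 ?mul0r //= => i _.
  by rewrite f0 mul0r.
have A_gt0 : 0 < A by rewrite lt_def A_neq0 A0.
have := disc (S / A).
have -> : (S / A) ^+ 2 * A - 2 * (S / A) * S + B = B - S ^+ 2 / A by field.
by rewrite subr_ge0 ler_pdivrMr // mulrC.
Qed.

Lemma ler_dot_dist h f g : `|dot h f - dot h g| <= nrm h * dist f g.
Proof. by rewrite dotBr cauchy_schwarz. Qed.

Lemma nrmD f g : nrm (fun i => f i + g i) <= nrm f + nrm g.
Proof.
have s0 : 0 <= nrm f + nrm g by rewrite addr_ge0 ?nrm_ge0.
rewrite -(ger0_norm s0) -sqrtr_sqr; apply: ler_wsqrtr.
have -> : \sum_i (f i + g i) ^+ 2 = \sum_i f i ^+ 2 + 2 * dot f g + \sum_i g i ^+ 2.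
  by rewrite /dot mulr_sumr -!big_split /=; apply: eq_bigr => i _; ring.
rewrite sqrrD -!nrm_sq lerD2r lerD2l -mulr_natr.
have := le_trans (ler_norm _) (cauchy_schwarz f g); lra.
Qed.

Lemma distC f g : dist f g = dist g f.
Proof. by rewrite /dist -nrmN; congr nrm; apply: funext => i; rewrite /vsub opprB. Qed.

Lemma dist_ge0 f g : 0 <= dist f g.
Proof. exact: nrm_ge0. Qed.

Lemma distxx f : dist f f = 0.
Proof. by rewrite /dist /nrm big1 ?sqrtr0 // => i _; rewrite /vsub subrr expr0n. Qed.

Lemma normr_le_dist f g i : `|f i - g i| <= dist f g.
Proof. exact: (normr_le_nrm (vsub f g)). Qed.

Lemma nrm_le_dist f g : nrm f <= nrm g + dist f g.
Proof.
apply: le_trans (nrmD _ _); rewrite le_eqVlt; apply/orP; left.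
by apply/eqP; congr nrm; apply: funext => i; rewrite /vsub; ring.
Qed.

Lemma nrm_lipschitz f g : `|nrm f - nrm g| <= dist f g.
Proof.
have := nrm_le_dist f g; have := nrm_le_dist g f; rewrite distC.
by rewrite ler_norml; lra.
Qed.

Definition unitv (i : T) : T -> R := fun l => (l == i)%:R.

Lemma sum_mul_unitv (F : T -> R) i : \sum_l F l * unitv i l = F i.
Proof.
by rewrite (bigD1 i) //= /unitv eqxx mulr1 big1 ?addr0 // => l /negbTE ->; rewrite mulr0.
Qed.

Lemma dot_unitv i f : dot (unitv i) f = f i.
Proof. by rewrite dotC /dot sum_mul_unitv. Qed.

Lemma nrm_unitv i : nrm (unitv i) = 1.
Proof.
rewrite /nrm (eq_bigr (fun l => unitv i l * unitv i l)) => [|l _]; last by rewrite expr2.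
by rewrite sum_mul_unitv /unitv eqxx sqrtr1.
Qed.

Lemma eq0_of_dot_ge0 f : (forall xi, nrm xi = 1 -> 0 <= dot xi f) -> forall i, f i = 0.
Proof.
move=> f_ge0 i; have := f_ge0 _ (nrm_unitv i).
have := f_ge0 (fun l => - unitv i l); rewrite nrmN nrm_unitv => /(_ erefl).
have -> : dot (fun l => - unitv i l) f = - dot (unitv i) f.
  by rewrite /dot -sumrN; apply: eq_bigr => l _; rewrite mulNr.
by rewrite dot_unitv; lra.
Qed.

End Euclid.

Arguments unitv {R T} i _.

Section MeanValue.
Variable R : realType.
Implicit Types (f : R -> R) (c d K eta : R).

Definition is_deriv1 f t d := forall e, 0 < e -> exists del, 0 < del /\
  forall s, `|s - t| < del -> `|f s - f t - d * (s - t)| <= e * `|s - t|.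

Lemma deriv1N f t d : is_deriv1 f t d -> is_deriv1 (fun s => - f s) t (- d).
Proof.
move=> fd e e0; have [del [del0 hdel]] := fd e e0; exists del; split => // s st.
have -> : - f s - - f t - - d * (s - t) = - (f s - f t - d * (s - t)) by ring.
by rewrite normrN hdel.
Qed.

Lemma deriv1_chord f c d K eta : is_deriv1 f c d -> d <= K -> 0 < eta ->
  exists del, 0 < del /\ forall s t, c - del < s -> s <= c -> c <= t -> t < c + del ->
    f t - f s <= (K + eta) * (t - s).
Proof.
move=> fd dK eta0; have [del [del0 hdel]] := fd eta eta0.
exists del; split => // s t ds sc ct td.
have /ler_normlP[fs _] : `|f s - f c - d * (s - c)| <= eta * `|s - c|.
  by apply: hdel; rewrite ler0_norm ?subr_le0 //; lra.
have /ler_normlP[_ ft] : `|f t - f c - d * (t - c)| <= eta * `|t - c|.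
  by apply: hdel; rewrite ger0_norm ?subr_ge0 //; lra.
rewrite ler0_norm ?subr_le0 // in fs; rewrite ger0_norm ?subr_ge0 // in ft.
have := ler_wpM2r (_ : 0 <= t - s) dK; lra.
Qed.

Lemma mvi_le f f' K : (forall t, 0 <= t <= 1 -> is_deriv1 f t (f' t)) ->
  (forall t, 0 <= t <= 1 -> f' t <= K) -> f 1 - f 0 <= K.
Proof.
move=> fd f'K; apply/ler_addgt0Pr => eta eta0.
(* the chord bound [f t - f 0 <= (K + eta) t] propagates up to [t = 1] *)
pose S := [set s : R | 0 <= s <= 1 /\ forall t, 0 <= t <= s -> f t - f 0 <= (K + eta) * t].
have S0 : S 0.
  rewrite /S /=; split=> [|t /andP[t0 t_le0]]; first by rewrite lexx ler01.
  have -> : t = 0 by apply/le_anti; rewrite t_le0 t0.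
  by rewrite subrr mulr0.
have S_le1 s : S s -> s <= 1 by case=> /andP[].
have supS : has_sup S by split; [exists 0 | exists 1].
pose c := sup S.
have c01 : 0 <= c <= 1.
  by rewrite (ub_le_sup supS.2 S0) ge_sup //; exists 0.
have /andP[c_ge0 c_le1] := c01.
have below_c t : 0 <= t -> t < c -> f t - f 0 <= (K + eta) * t.
  move=> t0 tc; have ct : 0 < c - t by rewrite subr_gt0.
  have [s [_ Ss] ts] := sup_adherent ct supS.
  by apply: Ss; rewrite t0 /=; rewrite /c in ts; lra.
have [del [del0 chord]] := deriv1_chord (fd c c01) (f'K c c01) eta0.
have upto_c t : 0 <= t <= c -> f t - f 0 <= (K + eta) * t.
  case/andP => t0; rewrite le_eqVlt => /orP[/eqP tc|]; last exact: below_c.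
  rewrite {t0}tc; have [c0|c_neq0] := eqVneq c 0; first by rewrite c0 subrr mulr0.
  pose m := Order.min del c.
  have m_pos : 0 < m by rewrite lt_min del0 lt_def c_neq0.
  have m_del : m <= del by rewrite ge_min lexx.
  have m_c : m <= c by rewrite ge_min lexx orbT.
  have := chord (c - m / 2) c; have := below_c (c - m / 2); lra.
have c1 : c = 1.
  apply/eqP; rewrite eq_le c_le1 leNgt; apply/negP => c_lt1.
  pose m := Order.min del (1 - c).
  have m_pos : 0 < m by rewrite lt_min del0 subr_gt0.
  have m_del : m <= del by rewrite ge_min lexx.
  have m_1c : m <= 1 - c by rewrite ge_min lexx orbT.
  have S_cm : S (c + m / 2).
    split=> [|t /andP[t0 t_le]]; first by apply/andP; lra.
    have [t_le_c|c_lt_t] := leP t c; first by apply: upto_c; rewrite t0.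
    have := chord c t; have := upto_c c; rewrite c_ge0 lexx; lra.
  have := ub_le_sup supS.2 S_cm; rewrite -/c; lra.
by have := upto_c 1; rewrite -c1 c_ge0 lexx c1 mulr1 => ->.
Qed.

Lemma mvi_norm f f' K : (forall t, 0 <= t <= 1 -> is_deriv1 f t (f' t)) ->
  (forall t, 0 <= t <= 1 -> `|f' t| <= K) -> `|f 1 - f 0| <= K.
Proof.
move=> fd f'K; rewrite ler_norml.
have := mvi_le fd (fun t t01 => le_trans (ler_norm _) (f'K t t01)).
have := @mvi_le (fun s => - f s) (fun s => - f' s) K (fun t t01 => deriv1N (fd t t01)).
have f'N t : 0 <= t <= 1 -> - f' t <= K.
  by move=> t01; rewrite (le_trans (ler_norm _)) // normrN f'K.
by move=> /(_ f'N) ? ?; apply/andP; split; lra.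
Qed.

End MeanValue.

Section Segment.
Variables (R : realType) (n : nat).
Implicit Types (p h k x y z : vec R n).

Definition seg p h (s : R) : vec R n := fun i => p i + s * h i.

Definition is_grad (g : vec R n -> R) y (G : vec R n) := forall e, 0 < e -> exists d, 0 < d /\
  forall z, dist z y < d -> `|g z - g y - dot G (vsub z y)| <= e * dist z y.

Definition is_jacobian (G : vec R n -> vec R n) x (K : 'I_n -> 'I_n -> R) :=
  forall e, 0 < e -> exists d, 0 < d /\ forall y, dist y x < d -> forall i,
    `|G y i - G x i - \sum_(j < n) K i j * (y j - x j)| <= e * dist y x.

Definition bilin (K : 'I_n -> 'I_n -> R) (a b : vec R n) : R :=
  \sum_(i < n) \sum_(j < n) K i j * a i * b j.

Lemma seg0 p h : seg p h 0 = p.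
Proof. by apply: funext => i; rewrite /seg mul0r addr0. Qed.

Lemma dist_seg p h s t : dist (seg p h s) (seg p h t) = `|s - t| * nrm h.
Proof. by rewrite /dist -nrmZ; congr nrm; apply: funext => i; rewrite /vsub /seg; ring. Qed.

Lemma dist_seg0 p h s : dist (seg p h s) p = `|s| * nrm h.
Proof. by rewrite -{2}(seg0 p h) dist_seg subr0. Qed.

Lemma deriv1_seg g G p h t : is_grad g (seg p h t) G ->
  is_deriv1 (fun s => g (seg p h s)) t (dot G h).
Proof.
move=> gG e e0; have nh0 := nrm_ge0 h.
have C0 : 0 < nrm h + 1 by rewrite ltr_wpDl.
have [d [d0 hd]] := gG (e / (nrm h + 1)) (divr_gt0 e0 C0).
exists (d / (nrm h + 1)); split => [|s st]; first by rewrite divr_gt0.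
have lin : dot G (vsub (seg p h s) (seg p h t)) = dot G h * (s - t).
  by rewrite /dot mulr_suml; apply: eq_bigr => j _; rewrite /vsub /seg; ring.
have st_nh : `|s - t| * nrm h <= `|s - t| * (nrm h + 1) by rewrite ler_wpM2l ?lerDl.
have := hd (seg p h s); rewrite lin dist_seg => /(_ _)/le_trans; apply.
  by apply: le_lt_trans st_nh _; rewrite -ltr_pdivlMr.
have -> : e / (nrm h + 1) * (`|s - t| * nrm h) = e * `|s - t| * (nrm h / (nrm h + 1)).
  by ring.
have e_st : 0 <= e * `|s - t| by rewrite mulr_ge0 // ltW.
by apply: ler_piMr => //; rewrite ler_pdivrMr // mul1r lerDl.
Qed.

Lemma deriv1_sub_quadratic (f : R -> R) (t d c1 c2 : R) : is_deriv1 f t d ->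
  is_deriv1 (fun s => f s - c1 * s - c2 * s ^+ 2) t (d - c1 - 2 * c2 * t).
Proof.
move=> fd e e0; have e2 : 0 < e / 2 by rewrite divr_gt0.
have C0 : 0 < 2 * (`|c2| + 1) by rewrite mulr_gt0 // ltr_wpDl.
have [d1 [d10 hd1]] := fd _ e2.
exists (Order.min d1 (e / (2 * (`|c2| + 1)))); split => [|s].
  by rewrite lt_min d10 divr_gt0.
rewrite lt_min => /andP[st1 st2].
have -> : f s - c1 * s - c2 * s ^+ 2 - (f t - c1 * t - c2 * t ^+ 2) - (d - c1 - 2 * c2 * t) * (s - t)
    = (f s - f t - d * (s - t)) - c2 * (s - t) ^+ 2 by ring.
apply: le_trans (ler_normB _ _) _.
have quad_small : `|c2 * (s - t) ^+ 2| <= e / 2 * `|s - t|.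
  rewrite normrM normrX expr2 mulrA ler_wpM2r //.
  move: st2; rewrite ltr_pdivlMr // => st2.
  have : `|c2| * `|s - t| <= (`|c2| + 1) * `|s - t| by rewrite ler_wpM2r ?lerDl.
  lra.
by have := hd1 s st1; lra.
Qed.

Lemma bilin_unitv K i j : bilin K (unitv i) (unitv j) = K i j.
Proof.
rewrite /bilin -(sum_mul_unitv (fun a => K a j) i); apply: eq_bigr => a _.
rewrite -(sum_mul_unitv (fun b => K a b * unitv i a) j).
by apply: eq_bigr => b _; ring.
Qed.

Lemma bilinZ K s a b :
  bilin K (fun l => s * a l) (fun l => s * b l) = s ^+ 2 * bilin K a b.
Proof.
rewrite /bilin mulr_sumr; apply: eq_bigr => i _; rewrite mulr_sumr.
by apply: eq_bigr => j _; ring.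
Qed.

Lemma bilin_add K a b : bilin K (fun l => a l + b l) (fun l => a l + b l)
  = bilin K a a + bilin K a b + bilin K b a + bilin K b b.
Proof.
rewrite /bilin -!big_split; apply: eq_bigr => i _ /=.
by rewrite -!big_split; apply: eq_bigr => j _ /=; ring.
Qed.

Lemma bilin_eq0 K : (forall i j, K i j = K j i) -> (forall h, bilin K h h = 0) ->
  forall i j, K i j = 0.
Proof.
move=> Ksym K0 i j; have diag l : K l l = 0 by rewrite -bilin_unitv K0.
by have := K0 (fun l => unitv i l + unitv j l); rewrite bilin_add !bilin_unitv !diag (Ksym j i); lra.
Qed.

Section BallEstimates.
Variables (g : vec R n -> R) (G : vec R n -> vec R n) (K : 'I_n -> 'I_n -> R).
Variables (x : vec R n) (r e : R).
Hypothesis e_ge0 : 0 <= e.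
Hypothesis g_grad : forall y, dist y x < r -> is_grad g y (G y).
Hypothesis G_lin : forall y, dist y x < r -> forall i,
  `|G y i - G x i - \sum_(j < n) K i j * (y j - x j)| <= e * dist y x.

Lemma segment_estimate p h rho : rho < r ->
  (forall s, 0 <= s <= 1 -> dist (seg p h s) x <= rho) ->
  `|g (seg p h 1) - g p - dot (G x) h - bilin K h (vsub p x) - 2^-1 * bilin K h h|
    <= n%:R * e * nrm h * rho.
Proof.
move=> rho_r near.
pose c1 := dot (G x) h + bilin K h (vsub p x); pose c2 := 2^-1 * bilin K h h.
(* the derivative of [phi] is the defect of [G] from its linearization at [x], seen along [h] *)
pose phi s := g (seg p h s) - c1 * s - c2 * s ^+ 2.
pose defect s i := G (seg p h s) i - G x i - \sum_(j < n) K i j * (seg p h s j - x j).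
have phi' s : 0 <= s <= 1 -> is_deriv1 phi s (\sum_(i < n) h i * defect s i).
  move=> s01.
  have -> : \sum_(i < n) h i * defect s i = dot (G (seg p h s)) h - c1 - 2 * c2 * s.
    have split_i i : h i * defect s i = G (seg p h s) i * h i - G x i * h i
        - \sum_(j < n) K i j * h i * vsub p x j - s * \sum_(j < n) K i j * h i * h j.
      rewrite /defect !mulrBr mulr_sumr -[in RHS]addrA -opprD; congr (_ - _ - _); [ring | ring |].
      by rewrite mulr_sumr -big_split; apply: eq_bigr => j _; rewrite /seg /vsub /=; ring.
    rewrite (eq_bigr _ (fun i _ => split_i i)) !sumrB -mulr_sumr /c1 /c2 /dot /bilin.
    by rewrite mulrA mulfV ?pnatr_eq0 // mul1r; ring.
  apply: deriv1_sub_quadratic; apply: deriv1_seg; apply: g_grad.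
  exact: le_lt_trans (near s s01) rho_r.
have bound s : 0 <= s <= 1 -> `|\sum_(i < n) h i * defect s i| <= n%:R * e * nrm h * rho.
  move=> s01; apply: le_trans (ler_norm_sum _ _ _) _.
  rewrite (_ : _ * rho = #|'I_n|%:R * (nrm h * (e * rho))); last by rewrite card_ord; ring.
  apply: sumr_le_card => i; rewrite normrM; apply: ler_pM => //; first exact: normr_le_nrm.
  have ys := near s s01; apply: le_trans (G_lin (le_lt_trans ys rho_r) i) _.
  exact: ler_wpM2l.
have := mvi_norm phi' bound.
by have -> : phi 1 - phi 0 = g (seg p h 1) - g p - dot (G x) h - bilin K h (vsub p x)
  - 2^-1 * bilin K h h by rewrite /phi seg0 /c1 /c2; ring.
Qed.

Lemma taylor_estimate z : dist z x < r ->
  `|g z - g x - dot (G x) (vsub z x) - 2^-1 * bilin K (vsub z x) (vsub z x)|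
    <= n%:R * e * dist z x ^+ 2.
Proof.
move=> zx; set h := vsub z x.
have near s : 0 <= s <= 1 -> dist (seg x h s) x <= dist z x.
  by case/andP=> s0 s1; rewrite dist_seg0 ger0_norm // ler_piMl ?nrm_ge0.
have := segment_estimate zx near.
have -> : seg x h 1 = z by apply: funext => i; rewrite /seg /h /vsub; ring.
have -> : bilin K h (vsub x x) = 0.
  by rewrite /bilin big1 // => i _; rewrite big1 // => j _; rewrite /vsub subrr mulr0.
by rewrite subr0 expr2 mulrA.
Qed.

Lemma second_difference h k : nrm h + nrm k < r ->
  `|g (seg (seg x k 1) h 1) - g (seg x h 1) - g (seg x k 1) + g x - bilin K h k|
    <= n%:R * e * nrm h * (nrm k + 2 * nrm h).
Proof.
move=> hk_r; have nh0 := nrm_ge0 h; have nk0 := nrm_ge0 k.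
have near_k s : 0 <= s <= 1 -> dist (seg (seg x k 1) h s) x <= nrm k + nrm h.
  case/andP=> s0 s1.
  have -> : dist (seg (seg x k 1) h s) x = nrm (fun i => k i + s * h i).
    by congr nrm; apply: funext => i; rewrite /vsub /seg; ring.
  by apply: le_trans (nrmD _ _) _; rewrite lerD2l nrmZ ger0_norm // ler_piMl.
have near_0 s : 0 <= s <= 1 -> dist (seg x h s) x <= nrm h.
  by case/andP=> s0 s1; rewrite dist_seg0 ger0_norm // ler_piMl.
have kh_r : nrm k + nrm h < r by lra.
have h_r : nrm h < r by lra.
have := segment_estimate kh_r near_k; have := segment_estimate h_r near_0.
have -> : vsub (seg x k 1) x = k by apply: funext => i; rewrite /vsub /seg; ring.
have -> : bilin K h (vsub x x) = 0.
  by rewrite /bilin big1 // => i _; rewrite big1 // => j _; rewrite /vsub subrr mulr0.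
move=> /ler_normlP[lo0 hi0] /ler_normlP[lo1 hi1]; rewrite ler_norml.
have -> : n%:R * e * nrm h * (nrm k + 2 * nrm h)
    = n%:R * e * nrm h * (nrm k + nrm h) + n%:R * e * nrm h * nrm h by ring.
apply/andP; split; lra.
Qed.

(* the second difference over the square [x, x + s e_i, x + s e_j, x + s e_i + s e_j]
   is estimated once in each order of the two directions *)
Lemma hessian_asym_le (i j : 'I_n) : 0 < r -> `|K i j - K j i| <= 6 * n%:R * e.
Proof.
move=> r0; pose s := r / 4; have s0 : 0 < s by rewrite divr_gt0.
have nrm_s l : nrm (fun m => s * unitv l m) = s by rewrite nrmZ nrm_unitv mulr1 gtr0_norm.
have := second_difference (h := fun m => s * unitv i m) (k := fun m => s * unitv j m).
have := second_difference (h := fun m => s * unitv j m) (k := fun m => s * unitv i m).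
rewrite !nrm_s !bilinZ !bilin_unitv.
have -> : seg (seg x (fun m => s * unitv i m) 1) (fun m => s * unitv j m) 1
        = seg (seg x (fun m => s * unitv j m) 1) (fun m => s * unitv i m) 1.
  by apply: funext => l; rewrite /seg; ring.
have s_r : s + s < r by rewrite /s; lra.
move=> /(_ s_r)/ler_normlP[lo0 hi0] /(_ s_r)/ler_normlP[lo1 hi1].
have s2 : 0 < s ^+ 2 by rewrite exprn_gt0.
rewrite -(ler_pM2r s2) -{1}(gtr0_norm s2) -normrM ler_norml.
apply/andP; split; nra.
Qed.

End BallEstimates.

Lemma hessian_sym g G K x r : 0 < r -> (forall y, dist y x < r -> is_grad g y (G y)) ->
  is_jacobian G x K -> forall i j, K i j = K j i.
Proof.
move=> r0 g_grad GK i j; apply/eqP; rewrite -subr_eq0 -normr_le0.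
apply/ler_addgt0Pr => eps eps0; rewrite add0r.
have C0 : 0 < 6 * n%:R + 1 :> R by rewrite ltr_pwDr ?mulr_ge0.
have [d [d0 Gd]] := GK (eps / (6 * n%:R + 1)) (divr_gt0 eps0 C0).
have rd0 : 0 < Order.min r d by rewrite lt_min r0 d0.
have [y_r y_d] : (forall y, dist y x < Order.min r d -> dist y x < r)
    /\ (forall y, dist y x < Order.min r d -> dist y x < d).
  by split=> y; rewrite lt_min => /andP[].
have := hessian_asym_le (ltW (divr_gt0 eps0 C0)) (fun y yx => g_grad y (y_r y yx))
  (fun y yx => Gd y (y_d y yx)) i j rd0.
move/le_trans; apply; rewrite mulrA ler_pdivrMr //.
by rewrite mulrDr mulr1 [eps * _]mulrC lerDl ltW.
Qed.

End Segment.

Definition taylor2_rem (R : realType) N n (u : vec R n -> vec R N) (x : vec R n)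
    (P : mat R N n) (X : arr R N n) (z : vec R n) : vec R N :=
  fun a => u z a - u x a - mv P (vsub z x) a - 2^-1 * quad X (vsub z x) a.

Section TwiceDifferentiable.
Variables (R : realType) (N n : nat).
Variables (u : vec R n -> vec R N) (x : vec R n) (Du : vec R n -> mat R N n) (D2 : arr R N n).
Hypothesis u2 : twice_diff_at u x Du D2.

Lemma twice_diff_grad : exists d, 0 < d /\ forall y, dist y x < d -> forall a,
  is_grad (fun z => u z a) y (fun i => Du y (a, i)).
Proof.
have [[d [d0 uD]] _] := u2; exists d; split=> // y yx a e e0.
have [del [del0 hdel]] := uD y yx e e0; exists del; split=> // z zy.
apply: le_trans (hdel z zy).
exact: (normr_le_nrm (fun t => u z t - u y t - \sum_(j < n) Du y (t, j) * (z j - y j)) a).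
Qed.

Lemma twice_diff_lin e : 0 < e -> exists d, 0 < d /\ forall y, dist y x < d -> forall a i,
  `|Du y (a, i) - Du x (a, i) - \sum_(j < n) D2 (a, i, j) * (y j - x j)| <= e * dist y x.
Proof.
have [_ DuD] := u2; move=> e0; have [d [d0 hd]] := DuD e e0; exists d; split=> // y yx a i.
apply: le_trans (hd y yx).
exact: (normr_le_nrm (fun t => Du y t - Du x t - \sum_(j < n) D2 (t, j) * (y j - x j)) (a, i)).
Qed.

Lemma twice_diff_sym : symarr D2.
Proof.
have [d [d0 ug]] := twice_diff_grad; move=> a i j.
apply: (hessian_sym (K := fun i j => D2 (a, i, j)) d0 (fun y yx => ug y yx a)) => e e0.
have [d' [d'0 hd']] := twice_diff_lin e0; exists d'; split=> // y yx i'; exact: hd'.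
Qed.

Lemma twice_diff_taylor eps : 0 < eps -> exists del, 0 < del /\ forall z, dist z x < del ->
  nrm (taylor2_rem u x (Du x) D2 z) <= eps * dist z x ^+ 2.
Proof.
move=> eps0; have C0 : 0 < N%:R * n%:R + 1 :> R by rewrite ltr_pwDr ?mulr_ge0.
pose e := eps / (N%:R * n%:R + 1); have e0 : 0 < e by rewrite divr_gt0.
have [d [d0 ug]] := twice_diff_grad; have [d1 [d10 Dlin]] := twice_diff_lin e0.
exists (Order.min d d1); split=> [|z]; first by rewrite lt_min d0 d10.
move=> zx; have [y_d y_d1] : (forall y, dist y x < Order.min d d1 -> dist y x < d)
    /\ (forall y, dist y x < Order.min d d1 -> dist y x < d1).
  by split=> y; rewrite lt_min => /andP[].
have coord a : `|taylor2_rem u x (Du x) D2 z a| <= n%:R * e * dist z x ^+ 2.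
  exact: (taylor_estimate (ltW e0) (fun y yx => ug y (y_d y yx) a)
    (fun y yx => Dlin y (y_d1 y yx) a) zx).
apply: le_trans (nrm_le_card coord) _; rewrite card_ord.
have -> : N%:R * (n%:R * e * dist z x ^+ 2)
    = N%:R * n%:R / (N%:R * n%:R + 1) * eps * dist z x ^+ 2 by rewrite /e; ring.
rewrite ler_wpM2r ?sqr_ge0 //; apply: ler_piMl; first exact: ltW.
by rewrite ler_pdivrMr // mul1r lerDl.
Qed.

End TwiceDifferentiable.

Section Cutoff.
Variable R : realType.
Implicit Types (q a b : R).

Definition cutoff q : R := if q <= 1 then 1 else if q <= 2 then 2 - q else 0.

Lemma cutoff_ge0 q : 0 <= cutoff q.
Proof. by rewrite /cutoff; case: ifP => // _; case: ifP => //; rewrite subr_ge0. Qed.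

Lemma cutoff_le1 q : cutoff q <= 1.
Proof. by rewrite /cutoff; case: ifPn => // /negbTE; rewrite leNgt => /negbFE; case: ifP => //; lra. Qed.

Lemma cutoff_small q : q <= 1 -> cutoff q = 1.
Proof. by rewrite /cutoff => ->. Qed.

Lemma cutoff_large q : 2 <= q -> cutoff q = 0.
Proof.
rewrite /cutoff => q2; case: ifP => [q1|_]; first lra.
case: ifP => // q2'; have -> : q = 2 by apply/le_anti; rewrite q2 q2'.
by rewrite subrr.
Qed.

Lemma cutoff_lipschitz a b : `|cutoff a - cutoff b| <= `|a - b|.
Proof.
have := ler_norm (a - b); have := ler_norm (b - a); rewrite distrC.
rewrite /cutoff => ? ?; case: (lerP a 1) => ?; case: (lerP b 1) => ?;
  try case: (lerP a 2) => ?; try case: (lerP b 2) => ?;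
  by rewrite ler_norml; apply/andP; split; lra.
Qed.

End Cutoff.

Section Majorant.
Variables (R : realType) (n : nat) (W : vec R n -> R) (x : vec R n) (d1 : R).
Hypothesis d1_gt0 : 0 < d1.
Hypothesis W_ge0 : forall z, 0 <= W z.
Hypothesis W_le : forall z, dist z x < d1 -> W z <= dist z x ^+ 2.

(* [cutoff] makes [majorant] continuous in [r]; a plain supremum over [0 < dist z x <= r]
   would only be monotone *)
Definition majorant_set r := [set v : R | v = 0 \/ exists z,
  0 < dist z x < d1 /\ v = W z / dist z x ^+ 2 * cutoff (dist z x / r)].

Definition majorant r := sup (majorant_set r).

Lemma ratio_le1 z : 0 < dist z x < d1 -> W z / dist z x ^+ 2 <= 1.
Proof. by case/andP=> z0 zd; rewrite ler_pdivrMr ?exprn_gt0 // mul1r W_le. Qed.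

Lemma ratio_ge0 z : 0 <= W z / dist z x ^+ 2.
Proof. by rewrite divr_ge0 ?sqr_ge0. Qed.

Lemma majorant_set_le1 r v : majorant_set r v -> v <= 1.
Proof.
case=> [->|[z [zx ->]]]; first exact: ler01.
by rewrite -[1]mulr1 ler_pM ?ratio_ge0 ?cutoff_ge0 ?ratio_le1 ?cutoff_le1.
Qed.

Lemma majorant_set_sup r : has_sup (majorant_set r).
Proof. by split; [exists 0; left | exists 1 => v /majorant_set_le1]. Qed.

Lemma majorant_ub r v : majorant_set r v -> v <= majorant r.
Proof. by move=> Sv; apply: ub_le_sup (majorant_set_sup r).2 _ Sv. Qed.

Lemma majorant_le r c : (forall v, majorant_set r v -> v <= c) -> majorant r <= c.
Proof. by apply: ge_sup; exists 0; left. Qed.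

Lemma majorant_ge0 r : 0 <= majorant r.
Proof. by apply: majorant_ub; left. Qed.

Lemma W_le_majorant z : 0 < dist z x < d1 -> W z <= majorant (dist z x) * dist z x ^+ 2.
Proof.
move=> zx; have /andP[z0 _] := zx.
have := majorant_ub (or_intror (ex_intro _ z (conj zx erefl)) : majorant_set (dist z x) _).
by rewrite divff ?gt_eqF // cutoff_small // mulr1 ler_pdivrMr ?exprn_gt0.
Qed.

Lemma majorant_small : (forall eps, 0 < eps -> exists del, 0 < del /\
    forall z, dist z x < del -> W z <= eps * dist z x ^+ 2) ->
  forall eps, 0 < eps -> exists del, 0 < del /\ forall r, 0 < r -> r < del -> majorant r <= eps.
Proof.
move=> W_o2 eps eps0; have [del [del0 Wdel]] := W_o2 eps eps0.
exists (del / 2); split=> [|r r0 rdel]; first by rewrite divr_gt0.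
apply: majorant_le => v [->|[z [/andP[z0 zd] ->]]]; first exact: ltW.
have [z_far|z_near] := lerP (2 * r) (dist z x).
  by rewrite cutoff_large ?mulr0; [exact: ltW | rewrite ler_pdivlMr // mulrC].
rewrite -[eps]mulr1 ler_pM ?ratio_ge0 ?cutoff_ge0 ?cutoff_le1 //.
by rewrite ler_pdivrMr ?exprn_gt0 // Wdel //; lra.
Qed.

Lemma majorant_lipschitz r r' : 0 < r -> 0 < r' ->
  majorant r' <= majorant r + d1 * `|r' - r| / (r * r').
Proof.
move=> r0 r'0; have rr0 : 0 < r * r' by rewrite mulr_gt0.
have slack_ge0 : 0 <= d1 * `|r' - r| / (r * r') by rewrite divr_ge0 ?mulr_ge0 // ltW.
apply: majorant_le => v [->|[z [zx ->]]]; first by rewrite addr_ge0 ?majorant_ge0.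
have /andP[z0 zd] := zx.
have cut : `|cutoff (dist z x / r') - cutoff (dist z x / r)| <= d1 * `|r' - r| / (r * r').
  apply: le_trans (cutoff_lipschitz _ _) _.
  have -> : dist z x / r' - dist z x / r = dist z x * (r - r') / (r * r') by field; rewrite ?gt_eqF.
  rewrite normrM normfV normrM (gtr0_norm z0) (gtr0_norm rr0) distrC.
  by rewrite ler_pM2r ?invr_gt0 // ler_wpM2r // ltW.
move: cut => /ler_normlP[_ cut].
have := majorant_ub (or_intror (ex_intro _ z (conj zx erefl)) : majorant_set r _).
have := ratio_ge0 z; have := ratio_le1 zx.
set q := W z / _ => q1 q0 qc0.
apply: (@le_trans _ _ (q * cutoff (dist z x / r) + q * (d1 * `|r' - r| / (r * r')))).
  by rewrite -mulrDr ler_wpM2l //; lra.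
by rewrite lerD // ler_piMl.
Qed.

Lemma majorant_dist r r' : 0 < r -> 0 < r' ->
  `|majorant r' - majorant r| <= d1 * `|r' - r| / (r * r').
Proof.
move=> r0 r'0; have := majorant_lipschitz r0 r'0; have := majorant_lipschitz r'0 r0.
by rewrite distrC [r' * r]mulrC ler_norml => ? ?; apply/andP; split; lra.
Qed.

Lemma majorant_cont r : 0 < r -> forall eps, 0 < eps -> exists del, 0 < del /\
  forall r', 0 < r' -> `|r' - r| < del -> `|majorant r' - majorant r| < eps.
Proof.
move=> r0 eps eps0; have C0 : 0 < 2 * (d1 + 1) by rewrite mulr_gt0 // addr_gt0.
have c0 : 0 < eps * r ^+ 2 / (2 * (d1 + 1)) by rewrite divr_gt0 // mulr_gt0 // exprn_gt0.
exists (Order.min (r / 2) (eps * r ^+ 2 / (2 * (d1 + 1)))); split=> [|r' r'0].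
  by rewrite lt_min c0 divr_gt0.
rewrite lt_min => /andP[near1 near2]; apply: le_lt_trans (majorant_dist r0 r'0) _.
have r'_big : r / 2 < r' by move: near1; rewrite ltr_norml => /andP[]; lra.
move: near2; rewrite ltr_pdivlMr // => near2.
rewrite ltr_pdivrMr ?mulr_gt0 //.
have : eps * (r * (r / 2)) < eps * (r * r') by rewrite ltr_pM2l // ltr_pM2l.
have : d1 * `|r' - r| <= (d1 + 1) * `|r' - r| by rewrite ler_wpM2r ?lerDl.
rewrite expr2 in near2; nra.
Qed.

End Majorant.

Section ContactJet.
Variables (R : realType) (N n : nat).
Implicit Types (xi w v : vec R N).

Definition diagc (m : R) : ('I_N * 'I_N)%type -> R := fun p => m * (p.1 == p.2)%:R.

Lemma diagc_sym m : symmx (diagc m).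
Proof. by move=> a b; rewrite /diagc /= eq_sym. Qed.

Lemma qform_vee xi w v : qform (vee xi w) v = dot xi v * dot w v.
Proof.
transitivity (2^-1 * (\sum_a \sum_b (xi a * v a) * (w b * v b)
                     + \sum_a \sum_b (w a * v a) * (xi b * v b))).
  rewrite -big_split mulr_sumr; apply: eq_bigr => a _.
  by rewrite -big_split mulr_sumr; apply: eq_bigr => b _ /=; rewrite /vee /=; ring.
by rewrite -!big_distrlr /= -/(dot xi v) -/(dot w v); field.
Qed.

Lemma qform_diagc c m v : qform (mxscale c (diagc m)) v = c * m * nrm v ^+ 2.
Proof.
rewrite nrm_sq /qform mulr_sumr; apply: eq_bigr => a _.
rewrite expr2 mulrA -(sum_mul_unitv (fun b => c * m * v a * v b) a); apply: eq_bigr => b _.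
by rewrite /mxscale /diagc /unitv /= eq_sym; ring.
Qed.

Lemma nrm_diagc_lt m e : 0 < e -> `|m| <= e / (N%:R * N%:R + 1) -> nrm (diagc m) < e.
Proof.
move=> e0 me; have NN0 : 0 <= N%:R * N%:R :> R by rewrite mulr_ge0.
have : nrm (diagc m) <= N%:R * N%:R * `|m|.
  apply: le_trans (nrm_le_card (c := `|m|) _) _; last by rewrite card_prod card_ord natrM.
  by move=> p; rewrite normrM ler_piMr // /diagc; case: (_ == _); rewrite ?normr1 ?normr0.
move/le_lt_trans; apply; apply: le_lt_trans (ler_wpM2l NN0 me) _.
by rewrite mulrA ltr_pdivrMr ?ltr_pwDr // mulrDr mulr1 [e * _]mulrC ltrDl.
Qed.

Lemma dist_diagc m m' : dist (diagc m') (diagc m) = nrm (diagc (m' - m)).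
Proof. by congr nrm; apply: funext => p; rewrite /vsub /diagc mulrBl. Qed.

Lemma jet2_of_taylor (Om : vec R n -> Prop) (u : vec R n -> vec R N) xi x
    (P : mat R N n) (X : arr R N n) :
  symarr X -> nrm xi = 1 ->
  (forall eps, 0 < eps -> exists del, 0 < del /\ forall z, dist z x < del ->
     nrm (taylor2_rem u x P X z) <= eps * dist z x ^+ 2) ->
  jet2 Om u xi x P X.
Proof.
move=> sX xi1 rem_o2; pose W z := nrm (taylor2_rem u x P X z).
have W_ge0 z : 0 <= W z by exact: nrm_ge0.
have [d1 [d10 W_le1]] := rem_o2 1 ltr01.
have W_le z : dist z x < d1 -> W z <= dist z x ^+ 2 by move/W_le1; rewrite mul1r.
have NN0 : 0 < N%:R * N%:R + 1 :> R by rewrite ltr_pwDr ?mulr_ge0.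
split=> //; exists (fun y => diagc (majorant W x d1 (nrm y))).
split; first by move=> y _; exact: diagc_sym.
split.
  move=> y y0 e e0.
  have [del [del0 Hdel]] := majorant_cont d10 W_ge0 W_le (nrm_gt0 y0) (divr_gt0 e0 NN0).
  exists del; split=> // y' y'0 y'y; rewrite dist_diagc; apply: nrm_diagc_lt => //.
  exact/ltW/Hdel/(le_lt_trans (nrm_lipschitz y' y) y'y)/nrm_gt0.
split.
  move=> e e0; have [del [del0 Hdel]] := majorant_small d1 W_ge0 rem_o2 (divr_gt0 e0 NN0).
  exists del; split=> // y y0 yd; apply: nrm_diagc_lt => //.
  by rewrite ger0_norm ?majorant_ge0 // Hdel ?nrm_gt0.
exists d1; split=> // z _ zx zd v; have z0 := dist_gt0 zx.
rewrite qform_vee qform_diagc.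
have Wz : W z <= majorant W x d1 (dist z x) * dist z x ^+ 2 by apply: W_le_majorant; rewrite ?z0.
apply: le_trans (ler_norm _) _; rewrite normrM.
apply: le_trans (ler_pM _ _ (cauchy_schwarz xi v) (cauchy_schwarz _ v)) _ => //.
rewrite xi1 mul1r (_ : nrm v * _ = W z * nrm v ^+ 2); last by rewrite /W; ring.
by rewrite [nrm (vsub z x) ^+ 2 * _]mulrC ler_wpM2r ?sqr_ge0.
Qed.

End ContactJet.

Section ContactImpliesClassical.
Variables (R : realType) (N n : nat) (Om : vec R n -> Prop).
Variable F : vec R n -> vec R N -> mat R N n -> arr R N n -> vec R N.

Lemma seqcv_cst (T : finType) (f : T -> R) : seqcv (fun _ => f) f.
Proof. by move=> e e0; exists 0%N => m _; rewrite distxx. Qed.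

Lemma jet2bar_of_jet2 u xi x (P : mat R N n) (X : arr R N n) :
  nrm xi = 1 -> Om x -> jet2 Om u xi x P X -> jet2bar Om u xi x P X.
Proof.
move=> xi1 Omx jet; exists (fun _ => xi), (fun _ => x), (fun _ => P), (fun _ => X).
by do !split=> //; exact: seqcv_cst.
Qed.

Lemma env_le_continuous xi x eta P X eps : F_continuous Om F -> Om x -> symarr X ->
  nrm xi = 1 -> 0 < eps -> (env Om F xi x eta P X <= (dot xi (F x eta P X) + eps)%:E)%E.
Proof.
move=> Fc Omx sX xi1 eps0; have [d [d0 Fd]] := Fc x eta P X Omx sX eps eps0.
apply: le_trans (ereal_inf_lbound (ex_intro2 _ _ (d / 2) _ erefl)) _.
  by rewrite /= divr_gt0.
apply: ge_ereal_sup => _ [y [th [Q [Y [Omy [sY [near ->]]]]]]]; rewrite lee_fin.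
have d2 : d / 2 < d by lra.
have := Fd y th Q Y Omy sY (le_lt_trans near d2).
have := ler_dot_dist xi (F y th Q Y) (F x eta P X); rewrite xi1 mul1r ler_norml.
by case/andP=> _ ? ?; lra.
Qed.

Lemma contact_sol_twice_diff u x Du D2 : contact_sol Om F u -> F_continuous Om F -> Om x ->
  twice_diff_at u x Du D2 -> forall a, F x (u x) (Du x) D2 a = 0.
Proof.
move=> cs Fc Omx u2; apply: eq0_of_dot_ge0 => xi xi1.
have jet := jet2_of_taylor Om (twice_diff_sym u2) xi1 (twice_diff_taylor u2).
have env_ge0 := cs x xi (Du x) D2 Omx xi1 (jet2bar_of_jet2 xi1 Omx jet).
apply/ler_addgt0Pr => eps eps0.
by have := le_trans env_ge0 (env_le_continuous (u x) (Du x) Fc Omx (twice_diff_sym u2) xi1 eps0); rewrite lee_fin.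
Qed.

End ContactImpliesClassical.

Lemma le0_of_small_mul (R : realType) (a M t0 : R) : 0 < t0 ->
  (forall t, 0 < t -> t < t0 -> a <= t * M) -> a <= 0.
Proof.
move=> t00 small; apply/ler_addgt0Pr => eta eta0; rewrite add0r.
have M0 : 0 < `|M| + 1 by rewrite ltr_wpDl.
pose t := Order.min (t0 / 2) (eta / (`|M| + 1)).
have t0_pos : 0 < t by rewrite lt_min !divr_gt0.
have t_le : t <= eta / (`|M| + 1) by rewrite ge_min lexx orbT.
have t_half : t <= t0 / 2 by rewrite ge_min lexx.
apply: le_trans (small t t0_pos _) _; first by lra.
apply: le_trans (_ : t * (`|M| + 1) <= eta); last by rewrite -ler_pdivlMr.
apply: ler_wpM2l; first exact: ltW.
by apply: le_trans (ler_norm M) _; rewrite lerDl.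
Qed.

Section RayGap.
Variables (R : realType) (N : nat) (xi : vec R N).
Hypothesis xi1 : nrm xi = 1.
Implicit Types (v w p q : vec R N).

(* [ray_gap xi v >= 0], with equality exactly on the ray [-R_+ xi] *)
Definition ray_gap v : R := nrm v + dot xi v.

Lemma ray_gap0 : ray_gap (fun _ => 0) = 0.
Proof. by rewrite /ray_gap /nrm /dot !big1 ?sqrtr0 ?addr0 // => i _; rewrite ?expr0n ?mulr0. Qed.

Lemma ray_gapZ t v : 0 <= t -> ray_gap (fun a => t * v a) = t * ray_gap v.
Proof.
move=> t0; rewrite /ray_gap nrmZ ger0_norm // /dot mulrDr mulr_sumr; congr (_ + _).
by apply: eq_bigr => a _; ring.
Qed.

Lemma ray_gapN_add v : ray_gap (fun a => - v a) + ray_gap v = 2 * nrm v.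
Proof.
rewrite /ray_gap nrmN (_ : dot xi (fun a => - v a) = - dot xi v); first by ring.
by rewrite /dot -sumrN; apply: eq_bigr => a _; rewrite mulrN.
Qed.

Lemma ray_gap_lipschitz v w : ray_gap v <= ray_gap w + 2 * dist v w.
Proof.
have := nrm_le_dist v w; have := ler_dot_dist xi v w.
by rewrite xi1 mul1r ler_norml /ray_gap => /andP[_ ?] ?; lra.
Qed.

Lemma sqr_nrm_add_ray v : nrm (fun a => v a + nrm v * xi a) ^+ 2 = 2 * nrm v * ray_gap v.
Proof.
have xi_sq : \sum_a xi a ^+ 2 = 1 by rewrite -nrm_sq xi1 expr1n.
rewrite nrm_sq (eq_bigr (fun a => v a ^+ 2 + 2 * nrm v * (xi a * v a) + nrm v ^+ 2 * xi a ^+ 2)).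
  by rewrite !big_split /= -!mulr_sumr xi_sq -nrm_sq /ray_gap /dot; ring.
by move=> a _; ring.
Qed.

Lemma ray_gap_le0 v : ray_gap v <= 0 -> forall a, v a = - nrm v * xi a.
Proof.
move=> gap0 a; have nv0 := nrm_ge0 v.
have : nrm (fun a => v a + nrm v * xi a) ^+ 2 = 0.
  by apply/le_anti; rewrite sqr_ge0 andbT sqr_nrm_add_ray; nra.
by move/eqP; rewrite sqrf_eq0 => /eqP/nrm_eq0/(_ a) /= ?; lra.
Qed.

(* the test vector [v = nrm w * xi + w] turns the quadratic-form bound into
   [nrm w * ray_gap w * ray_gap w <= 2 K * nrm w * ray_gap w] *)
Lemma ray_gap_of_vee w K : 0 <= K ->
  (forall v, qform (vee xi w) v <= K * nrm v ^+ 2) -> ray_gap w <= 2 * K.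
Proof.
move=> K0 vee_le; pose v a := nrm w * xi a + w a.
have xi_sq : \sum_a xi a ^+ 2 = 1 by rewrite -nrm_sq xi1 expr1n.
have xi_v : dot xi v = ray_gap w.
  rewrite /dot (eq_bigr (fun a => nrm w * xi a ^+ 2 + xi a * w a)) => [|a _]; last by rewrite /v; ring.
  by rewrite big_split /= -mulr_sumr xi_sq mulr1.
have w_v : dot w v = nrm w * ray_gap w.
  rewrite /dot (eq_bigr (fun a => nrm w * (xi a * w a) + w a ^+ 2)) => [|a _]; last by rewrite /v; ring.
  by rewrite big_split /= -mulr_sumr -nrm_sq /ray_gap /dot; ring.
have nv : nrm v ^+ 2 = 2 * nrm w * ray_gap w.
  rewrite -sqr_nrm_add_ray; congr (_ ^+ 2); congr nrm; apply: funext => a; rewrite /v; ring.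
have := vee_le v; rewrite qform_vee xi_v w_v nv => le.
have [gap_le0|gap_gt0] := lerP (ray_gap w) 0; first by rewrite (le_trans gap_le0) ?mulr_ge0.
have nw_gt0 : 0 < nrm w.
  rewrite lt_def nrm_ge0 andbT; apply/eqP => nw0; move: gap_gt0.
  by rewrite /ray_gap nw0 add0r /dot big1 ?ltxx // => a _; rewrite (nrm_eq0 nw0) mulr0.
rewrite -(ler_pM2r (mulr_gt0 nw_gt0 gap_gt0)); nra.
Qed.

Lemma ray_gap_expansion p q C : 0 <= C ->
  (forall eps, 0 < eps -> exists del, 0 < del /\ forall t, 0 < t -> t < del ->
     ray_gap (fun a => t * p a + t ^+ 2 * q a) <= eps * t ^+ 2 * C) ->
  ray_gap p <= 0 /\ ((forall a, p a = 0) -> ray_gap q <= 0).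
Proof.
move=> C0 small; split.
  have [del [del0 hdel]] := small 1 ltr01.
  apply: (le0_of_small_mul (M := C + 2 * nrm q) del0) => t t0 tdel.
  have := hdel t t0 tdel.
  have -> : (fun a => t * p a + t ^+ 2 * q a) = (fun a => t * (p a + t * q a)).
    by apply: funext => a; ring.
  rewrite (ray_gapZ (fun a => p a + t * q a) (ltW t0)) mul1r expr2 -mulrA ler_pM2l // => gap_le.
  have -> : t * (C + 2 * nrm q) = t * C + 2 * dist p (fun a => p a + t * q a).
    rewrite /dist (_ : vsub _ _ = fun a => t * (- q a)); last first.
      by apply: funext => a; rewrite /vsub; ring.
    by rewrite nrmZ nrmN gtr0_norm //; ring.
  by apply: le_trans (ray_gap_lipschitz p (fun a => p a + t * q a)) _; rewrite lerD2r.
move=> p0; apply/ler_addgt0Pr => eta eta0; rewrite add0r.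
have C1 : 0 < C + 1 by rewrite ltr_wpDl.
have [del [del0 hdel]] := small (eta / (C + 1)) (divr_gt0 eta0 C1).
have half : del / 2 < del by lra.
have := hdel (del / 2) (divr_gt0 del0 (ltr0n _ 2)) half.
have -> : (fun a => del / 2 * p a + (del / 2) ^+ 2 * q a) = (fun a => (del / 2) ^+ 2 * q a).
  by apply: funext => a; rewrite p0 mulr0 add0r.
have del2 : 0 < (del / 2) ^+ 2 by rewrite exprn_gt0 ?divr_gt0.
rewrite ray_gapZ ?sqr_ge0 // (_ : _ * C = (del / 2) ^+ 2 * (eta * (C / (C + 1)))); last by ring.
rewrite ler_pM2l // => /le_trans; apply; apply: ler_piMr; first exact: ltW.
by rewrite ler_pdivrMr // mul1r lerDl.
Qed.

End RayGap.

Section Arrays.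
Variables (R : realType) (N n : nat).
Implicit Types (P Q : mat R N n) (X Y : arr R N n) (h : vec R n).

Lemma mvBl P Q h a : mv (vsub P Q) h a = mv P h a - mv Q h a.
Proof. by rewrite /mv -sumrB; apply: eq_bigr => i _; rewrite /vsub mulrBl. Qed.

Lemma quadBl X Y h a : quad (vsub X Y) h a = quad X h a - quad Y h a.
Proof.
rewrite /quad -sumrB; apply: eq_bigr => i _; rewrite -sumrB; apply: eq_bigr => j _.
by rewrite /vsub; ring.
Qed.

Lemma mvZr P t h a : mv P (fun i => t * h i) a = t * mv P h a.
Proof. by rewrite /mv mulr_sumr; apply: eq_bigr => i _; ring. Qed.

Lemma quadZr X t h a : quad X (fun i => t * h i) a = t ^+ 2 * quad X h a.
Proof. exact: bilinZ. Qed.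

Lemma mv_unitv P i a : mv P (unitv i) a = P (a, i).
Proof. exact: sum_mul_unitv. Qed.

Lemma quad_eq0 X : symarr X -> (forall h a, quad X h a = 0) -> X = (fun _ => 0).
Proof.
move=> sX X0; apply: funext => -[[a i] j].
exact: (bilin_eq0 (K := fun i j => X (a, i, j)) (fun i j => sX a i j) (fun h => X0 h a)).
Qed.

Lemma dot_quad (c : vec R N) X h :
  \sum_(i < n) \sum_(j < n) (\sum_(a < N) c a * X (a, i, j)) * h i * h j
  = dot c (fun a => quad X h a).
Proof.
transitivity (\sum_(i < n) \sum_(a < N) \sum_(j < n) c a * (X (a, i, j) * h i * h j)).
  apply: eq_bigr => i _; rewrite exchange_big; apply: eq_bigr => j _.
  by rewrite !mulr_suml; apply: eq_bigr => a _; ring.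
rewrite exchange_big; apply: eq_bigr => a _; rewrite /quad mulr_sumr; apply: eq_bigr => i _.
by rewrite mulr_sumr; apply: eq_bigr => j _; ring.
Qed.

Lemma dist_defect_rem u x P Q X Y z :
  dist (fun a => mv (vsub Q P) (vsub z x) a + 2^-1 * quad (vsub Y X) (vsub z x) a)
       (taylor2_rem u x P X z) = nrm (taylor2_rem u x Q Y z).
Proof.
rewrite /dist -nrmN; congr nrm; apply: funext => a.
by rewrite /vsub /taylor2_rem mvBl quadBl; ring.
Qed.

Lemma qform_mxscale c (A : ('I_N * 'I_N)%type -> R) v : qform (mxscale c A) v = c * qform A v.
Proof.
rewrite /qform mulr_sumr; apply: eq_bigr => a _; rewrite mulr_sumr.
by apply: eq_bigr => b _; rewrite /mxscale; ring.
Qed.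

Lemma qform_le_nrm (A : ('I_N * 'I_N)%type -> R) v :
  qform A v <= N%:R * N%:R * nrm A * nrm v ^+ 2.
Proof.
apply: le_trans (ler_norm _) _; apply: le_trans (ler_norm_sum _ _ _) _.
rewrite (_ : _ * _ = N%:R * (N%:R * (nrm A * (nrm v * nrm v)))); last by ring.
apply: le_trans (sumr_le_card (c := N%:R * (nrm A * (nrm v * nrm v))) _) _.
  move=> a; apply: le_trans (ler_norm_sum _ _ _) _.
  apply: le_trans (sumr_le_card (c := nrm A * (nrm v * nrm v)) _) _; last by rewrite card_ord.
  move=> b.
  rewrite !normrM mulrA ler_pM ?mulr_ge0 //; last exact: normr_le_nrm.
  by rewrite ler_pM ?normr_le_nrm //; apply: (normr_le_nrm A (a, b)).
by rewrite card_ord.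
Qed.

End Arrays.

Section JetAtTwiceDifferentiable.
Variables (R : realType) (N n : nat) (Om : vec R n -> Prop).
Variables (u : vec R n -> vec R N) (Du : vec R n -> mat R N n) (Dv : arr R N n) (y : vec R n).
Variables (xi : vec R N) (P : mat R N n) (X : arr R N n).
Hypotheses (Om_open : is_open Om) (Omy : Om y) (xi1 : nrm xi = 1).
Hypotheses (u2 : twice_diff_at u y Du Dv) (jet : jet2 Om u xi y P X).

Definition jet_defect (h : vec R n) : vec R N :=
  fun a => mv (vsub (Du y) P) h a + 2^-1 * quad (vsub Dv X) h a.

Lemma jet_defect_small eps : 0 < eps -> exists del, 0 < del /\ forall z, dist z y < del ->
  ray_gap xi (jet_defect (vsub z y)) <= eps * dist z y ^+ 2.
Proof.
move=> eps0; have [_ [T [_ [_ [T_small [d [d0 contact]]]]]]] := jet.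
have [rho [rho0 ball]] := Om_open Omy.
have NN0 : 0 <= N%:R * N%:R :> R by rewrite mulr_ge0.
have e4 : 0 < eps / 4 by rewrite divr_gt0.
have [d1 [d10 taylor]] := twice_diff_taylor u2 e4.
have [d2 [d20 Tsmall]] := T_small (eps / (4 * (N%:R * N%:R) + 1)) (divr_gt0 eps0 (ltr_wpDl (mulr_ge0 (ler0n _ 4) NN0) ltr01)).
pose del := Order.min (Order.min rho d) (Order.min d1 d2).
exists del; split=> [|z]; first by rewrite !lt_min rho0 d0 d10 d20.
rewrite !lt_min => /andP[/andP[z_rho z_d] /andP[z_d1 z_d2]].
have [->|zy] := eqVneq z y.
  rewrite (_ : jet_defect _ = fun _ => 0) ?ray_gap0 ?distxx ?expr0n ?mulr0 //.
  by apply: funext => a; rewrite /jet_defect /mv /quad !big1 ?mulr0 ?addr0 // => i _;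
    rewrite ?big1 /vsub ?subrr ?mulr0 // => j _; rewrite subrr !mulr0.
have z0 : 0 < dist z y by apply/dist_gt0/eqP.
have h0 : vsub z y <> @zerov R 'I_n by move=> h0; move: z0; rewrite /dist h0 nrm0 ltxx.
have Th := Tsmall _ h0 z_d2.
pose K := dist z y ^+ 2 * (N%:R * N%:R * nrm (T (vsub z y))).
have K0 : 0 <= K by rewrite !mulr_ge0 ?sqr_ge0 ?nrm_ge0.
have gap_rem : ray_gap xi (taylor2_rem u y P X z) <= 2 * K.
  apply: ray_gap_of_vee => // v; apply: le_trans (contact z (ball z z_rho) (elimN eqP zy) z_d v) _.
  by rewrite qform_mxscale /K -[_ * _ * nrm v ^+ 2]mulrA ler_wpM2l ?sqr_ge0 // qform_le_nrm.
have rem := taylor z z_d1.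
have := ray_gap_lipschitz xi1 (jet_defect (vsub z y)) (taylor2_rem u y P X z).
rewrite dist_defect_rem => /le_trans; apply.
have NT : N%:R * N%:R * nrm (T (vsub z y)) <= eps / 4.
  apply: le_trans (ler_wpM2l NN0 (ltW Th)) _.
  by rewrite [_ * (eps / _)]mulrA ler_pdivrMr ?ltr_wpDl ?mulr_ge0 //; lra.
have := ler_wpM2l (sqr_ge0 (dist z y)) NT; rewrite -/K.
by have := ler_wpM2l (ler0n _ 2) rem; lra.
Qed.

Lemma jet_defect_ray h : ray_gap xi (fun a => mv (vsub (Du y) P) h a) <= 0 /\
  ((forall a, mv (vsub (Du y) P) h a = 0) ->
   ray_gap xi (fun a => 2^-1 * quad (vsub Dv X) h a) <= 0).
Proof.
apply: (ray_gap_expansion xi1 (C := nrm h ^+ 2)) => [|eps eps0]; first exact: sqr_ge0.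
have [del [del0 small]] := jet_defect_small eps0.
have C0 : 0 < nrm h + 1 by rewrite ltr_wpDl ?nrm_ge0.
exists (del / (nrm h + 1)); split=> [|t t0 tdel]; first by rewrite divr_gt0.
have zy : vsub (seg y h t) y = fun i => t * h i.
  by apply: funext => i; rewrite /vsub /seg; ring.
have dz : dist (seg y h t) y = t * nrm h by rewrite dist_seg0 gtr0_norm.
have zd : dist (seg y h t) y < del.
  rewrite dz; apply: le_lt_trans (_ : t * nrm h <= t * (nrm h + 1)) _.
    by rewrite ler_wpM2l ?lerDl // ltW.
  by rewrite -ltr_pdivlMr.
have := small _ zd; rewrite zy dz exprMn mulrA.
have -> : jet_defect (fun i => t * h i)
    = fun a => t * mv (vsub (Du y) P) h a + t ^+ 2 * (2^-1 * quad (vsub Dv X) h a).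
  by apply: funext => a; rewrite /jet_defect mvZr quadZr; ring.
by [].
Qed.

Lemma jet_grad_eq : P = Du y.
Proof.
apply: funext => -[a i]; apply/eqP; rewrite eq_sym -subr_eq0; apply/eqP.
have [gap1 _] := jet_defect_ray (unitv i).
have [gap2 _] := jet_defect_ray (fun l => -1 * unitv i l).
have col : (fun b => mv (vsub (Du y) P) (unitv i) b) = (fun b => vsub (Du y) P (b, i)).
  by apply: funext => b; rewrite mv_unitv.
have colN : (fun b => mv (vsub (Du y) P) (fun l => -1 * unitv i l) b)
    = (fun b => - vsub (Du y) P (b, i)).
  by apply: funext => b; rewrite mvZr mv_unitv mulN1r.
rewrite col in gap1; rewrite colN in gap2.
have sum := ray_gapN_add xi (fun b => vsub (Du y) P (b, i)); rewrite /= in sum.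
have col0 : nrm (fun b => vsub (Du y) P (b, i)) = 0.
  by apply/le_anti; rewrite nrm_ge0 andbT; lra.
exact: (nrm_eq0 col0 a).
Qed.

Lemma jet_quad_ray h a : 2^-1 * quad (vsub Dv X) h a
  = - nrm (fun b => 2^-1 * quad (vsub Dv X) h b) * xi a.
Proof.
apply: (ray_gap_le0 xi1); apply: (jet_defect_ray h).2 => b.
by rewrite -jet_grad_eq mvBl subrr.
Qed.

Lemma jet2_dot_ge0 (F : vec R n -> vec R N -> mat R N n -> arr R N n -> vec R N) :
  degenerate_elliptic Om F -> (forall a, F y (u y) (Du y) Dv a = 0) ->
  0 <= dot xi (F y (u y) P X).
Proof.
move=> ell F0; have [sX _] := jet; have sDv := twice_diff_sym u2.
rewrite jet_grad_eq.
have ell_q h : 0 <= 2 * nrm (fun b => 2^-1 * quad (vsub Dv X) h b) * dot xi (F y (u y) (Du y) X).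
  have := ell y (u y) (Du y) Dv X Omy sDv sX h.
  rewrite (dot_quad (fun a => F y (u y) (Du y) Dv a - F y (u y) (Du y) X a) (vsub Dv X)).
  congr (_ <= _); rewrite /dot mulr_sumr; apply: eq_bigr => a _.
  have two_half : quad (vsub Dv X) h a = 2 * (2^-1 * quad (vsub Dv X) h a).
    by rewrite mulrA mulfV ?pnatr_eq0 // mul1r.
  by rewrite F0 two_half jet_quad_ray; ring.
have [[h q_gt0]|q0] := pselect (exists h, 0 < nrm (fun b => 2^-1 * quad (vsub Dv X) h b)).
  by have := ell_q h; rewrite pmulr_rge0 // mulr_gt0.
have quad0 h a : quad (vsub Dv X) h a = 0.
  have : nrm (fun b => 2^-1 * quad (vsub Dv X) h b) = 0.
    by apply/le_anti; rewrite nrm_ge0 andbT leNgt; apply/negP => ?; apply: q0; exists h.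
  by move/nrm_eq0/(_ a)/eqP; rewrite mulf_eq0 invr_eq0 pnatr_eq0 => /eqP.
have sB : symarr (vsub Dv X) by move=> a i j; rewrite /vsub sDv sX.
have X_Dv : X = Dv.
  apply: funext => p; have /= /eqP := congr1 (fun f => f p) (quad_eq0 sB quad0).
  by rewrite /vsub subr_eq0 => /eqP.
by rewrite X_Dv /dot big1 // => a _; rewrite F0 mulr0.
Qed.

End JetAtTwiceDifferentiable.

Section ClassicalImpliesContact.
Variables (R : realType) (N n : nat) (Om : vec R n -> Prop).
Variable F : vec R n -> vec R N -> mat R N n -> arr R N n -> vec R N.

Lemma symarr_seqcv (Xs : nat -> arr R N n) X :
  (forall m, symarr (Xs m)) -> seqcv Xs X -> symarr X.
Proof.
move=> sXs cX a i j; apply/eqP; rewrite -subr_eq0 -normr_le0.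
apply/ler_addgt0Pr => eps eps0; rewrite add0r.
have [M XM] := cX (eps / 2) (divr_gt0 eps0 (ltr0n _ 2)); have := XM M (leqnn M).
have := normr_le_dist (Xs M) X (a, i, j); have := normr_le_dist (Xs M) X (a, j, i).
rewrite (sXs M a i j) => /ler_normlP[? ?] /ler_normlP[? ?] ?.
by rewrite ler_norml; apply/andP; split; lra.
Qed.

Lemma env_ge0_of_approx xi x eta P X :
  (forall e eps, 0 < e -> 0 < eps -> exists y th Q Y, Om y /\ symarr Y /\
     dist x y + dist eta th + dist P Q + dist X Y <= e /\ - eps <= dot xi (F y th Q Y)) ->
  (0 <= env Om F xi x eta P X)%E.
Proof.
move=> approx; apply: le_ereal_inf_tmp => _ [e e0 <-]; apply/lee_subgt0Pr => eps eps0.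
have [y [th [Q [Y [Omy [sY [near gap]]]]]]] := approx e eps e0 eps0.
apply: (@le_trans _ _ (dot xi (F y th Q Y))%:E); first by rewrite add0e -EFinN lee_fin.
by apply: ereal_sup_ubound; exists y, th, Q, Y.
Qed.

Lemma contact_sol_of_twice_diff u : is_open Om -> loc_bounded Om F -> cont_on Om u ->
  (exists (Du : vec R n -> mat R N n) (D2 : vec R n -> arr R N n),
     (forall x, Om x -> twice_diff_at u x Du (D2 x)) /\
     (forall x, Om x -> forall a, F x (u x) (Du x) (D2 x) a = 0)) ->
  degenerate_elliptic Om F -> contact_sol Om F u.
Proof.
move=> Om_open F_bd u_cont [Du [D2 [u2 F0]]] ell x xi P X Omx xi1
  [xis [xs [Ps [Xs [jets [cxi [cx [cP cX]]]]]]]].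
have dot_ge0 m : 0 <= dot (xis m) (F (xs m) (u (xs m)) (Ps m) (Xs m)).
  have [xis1 [Omm jet]] := jets m.
  exact: (jet2_dot_ge0 Om_open Omm xis1 (u2 _ Omm) jet ell (F0 _ Omm)).
have sX : symarr X by apply: (symarr_seqcv _ cX) => m; have [_ [_ []]] := jets m.
have [e0 [M [e00 FM]]] := F_bd x (u x) P X Omx sX.
apply: env_ge0_of_approx => e eta e_gt0 eta0.
pose e1 := Order.min e e0 / 4.
have e1_gt0 : 0 < e1 by rewrite divr_gt0 // lt_min e_gt0.
have [du [du0 u_near]] := u_cont x Omx e1 e1_gt0.
have M1 : 0 < `|M| + 1 by rewrite ltr_wpDl.
have e1_du : 0 < Order.min e1 du by rewrite lt_min e1_gt0.
have [m1 xs_near] := cx _ e1_du.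
have [m2 Ps_near] := cP e1 e1_gt0.
have [m3 Xs_near] := cX e1 e1_gt0.
have [m4 xis_near] := cxi (eta / (`|M| + 1)) (divr_gt0 eta0 M1).
pose m := maxn (maxn m1 m2) (maxn m3 m4).
have [m1m m2m m3m m4m] : [/\ (m1 <= m)%N, (m2 <= m)%N, (m3 <= m)%N & (m4 <= m)%N].
  by rewrite !leq_max !leqnn !orbT.
have [_ [Omm [sXm _]]] := jets m.
have := xs_near m m1m; rewrite lt_min => /andP[xs_e1 xs_du].
have := u_near _ Omm xs_du; have := Ps_near m m2m; have := Xs_near m m3m.
move=> X_e1 P_e1 u_e1; rewrite distC in X_e1; rewrite distC in P_e1.
rewrite distC in u_e1; rewrite distC in xs_e1.
have near : dist x (xs m) + dist (u x) (u (xs m)) + dist P (Ps m) + dist X (Xs m) <= Order.min e e0.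
  by rewrite /e1 in xs_e1 X_e1 P_e1 u_e1; lra.
exists (xs m), (u (xs m)), (Ps m), (Xs m); do 3!split => //.
  by apply: le_trans near _; rewrite ge_min lexx.
have min_e0 : Order.min e e0 <= e0 by rewrite ge_min lexx orbT.
have FmM := FM _ _ _ _ Omm sXm (le_trans near min_e0).
set Fm := F _ _ _ _ in FmM *; have := dot_ge0 m; rewrite -/Fm.
have := ler_dot_dist Fm xi (xis m); rewrite !(dotC Fm) distC.
have : nrm Fm * dist (xis m) xi <= eta.
  apply: le_trans (_ : (`|M| + 1) * (eta / (`|M| + 1)) <= eta); last by rewrite mulrC divfK ?gt_eqF.
  apply: ler_pM; rewrite ?nrm_ge0 ?dist_ge0 ?(ltW (xis_near m m4m)) //.
  by apply: le_trans FmM _; apply: le_trans (ler_norm M) _; rewrite lerDl.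
by move=> ? /ler_normlP[? ?] ?; lra.
Qed.

End ClassicalImpliesContact.

Local Close Scope classical_set_scope.
Unset Implicit Arguments.

Theorem theorem22 (R : realType) (n N : nat) (Om : vec R n -> Prop)
    (F : vec R n -> vec R N -> mat R N n -> arr R N n -> vec R N) (u : vec R n -> vec R N) :
  is_open Om -> loc_bounded Om F -> cont_on Om u ->
  (* (a) *)
  (contact_sol Om F u -> F_continuous Om F ->
     forall (x : vec R n) (Du : vec R n -> mat R N n) (D2 : arr R N n),
       Om x -> twice_diff_at u x Du D2 -> forall a, F x (u x) (Du x) D2 a = 0) /\
  (* (b) *)
  ((exists (Du : vec R n -> mat R N n) (D2 : vec R n -> arr R N n),
      (forall x, Om x -> twice_diff_at u x Du (D2 x)) /\
      (forall x, Om x -> forall a, F x (u x) (Du x) (D2 x) a = 0)) ->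
   degenerate_elliptic Om F -> contact_sol Om F u).
Proof.
move=> Om_open F_bd u_cont; split.
  by move=> cs Fc x Du D2 Omx u2; exact: contact_sol_twice_diff cs Fc Omx u2.
by move=> u2 ell; exact: contact_sol_of_twice_diff Om_open F_bd u_cont u2 ell.
Qed.
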